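(* Let $G=(V,E)$ be a connected graph with $V=\{1,\ldots,n\}$, $\mathbf{w}\colon E\to\{1,\ldots,N\}$, $w,\ell\in\mathbb{N}$ with $\ell$ even and $\ell\le n$, and let $\mathcal{T}$ be an elimination tree of $G$ with root $r$. Write $P_{(r)}(\emptyset)=\sum_{a,b,c,d}\alpha_{a,b,c,d}\,x^ay^bz^c\omega^d$. Then $|\mathcal{M}_{w,\ell}|=\alpha_{\ell/2,\ell/2,n-\ell,w}$.
   Context: Two matchings $M_1,M_2$ are consistent if $M_1\cap M_2=\emptyset$ and $V(M_1)=V(M_2)$ ($V(M)$ = set of endpoints of edges of $M$). $\mathcal{M}_{w,\ell}$ is the set of ordered pairs $(M_1,M_2)$ of consistent matchings in $G$ with $|M_1|=|M_2|=\ell/2$ and $\mathbf{w}(M_1\cup M_2)=w$, where $\mathbf{w}(F)=\sum_{e\in F}\mathbf{w}(e)$. An elimination tree of $G$ is a rooted tree on vertex set $V$ such that for every edge $\{u,v\}\in E$ one of $u,v$ is an ancestor of the other. $\mathtt{tree}[v]$ is the set of nodes of the subtree rooted at $v$ (including $v$). For $W\subseteq V$ let $W^+=\{u,u+n\mid u\in W\}$; $\delta[U]=\{e\in E\mid e\cap U\ne\emptyset\}$. Define $\mathtt{tpl}(W)=\{(E_1,E_2,L)\mid E_1,E_2\subseteq\delta[W],\ L\subseteq W,\ E_1\cap E_2=\emptyset\}$; $\mathtt{mon}(E_1,E_2,L)=x^{|E_1|}y^{|E_2|}z^{|L|}\omega^{\mathbf{w}(E_1\cup E_2)}$; for $I\subseteq[2n]$,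 $\mathtt{dsj}(I)$ is the set of triples $(E_1,E_2,L)$ with $\{s,t\}\cap I=\emptyset$ for all $\{s,t\}\in E_1$, $\{s+n,t+n\}\cap I=\emptyset$ for all $\{s,t\}\in E_2$, and $L^+\cap I=\emptyset$. With Iverson bracket $[\cdot]$, for the root $r$ (whose ancestor set excluding itself is empty), $$P_{(r)}(\emptyset)=\sum_{(E_1,E_2,L)\in\mathtt{tpl}(\mathtt{tree}[r])}\mathtt{mon}(E_1,E_2,L)\sum_{K\subseteq(\mathtt{tree}[r])^+}(-1)^{|K|}[(E_1,E_2,L)\in\mathtt{dsj}(K)]\in\mathbb{Z}[x,y,z,\omega].$$ *)

From HB Require Import structures.
From mathcomp Require Import all_boot all_order all_algebra.
From mathcomp Require Import mpoly.
Set Implicit Arguments. Unset Strict Implicit. Unset Printing Implicit Defensive.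
Import GRing.Theory.
Local Open Scope ring_scope.

Section Defs.
Variable n : nat.
(* Vertices V = {1,..,n} are encoded by 'I_n (0-based).
   The doubled vertex set [2n] is encoded by 'I_n + 'I_n : inl u ~ u, inr u ~ u+n. *)
Implicit Types (E F : {set {set 'I_n}}) (W L : {set 'I_n}).

Definition simple_graph E : Prop := forall e, e \in E -> #|e| = 2.

Definition adj E : rel 'I_n := fun u v => [set u; v] \in E.

Definition connected_graph E : Prop := forall u v, connect (adj E) u v.

Definition wsum (wt : {set 'I_n} -> nat) F : nat := (\sum_(e in F) wt e)%N.

Definition Vset F : {set 'I_n} := \bigcup_(e in F) e.

Definition is_matching E F : bool :=
  (F \subset E) && [forall e in F, forall f in F, (e != f) ==> [disjoint e & f]].

Definition consistent F1 F2 : bool := (F1 :&: F2 == set0) && (Vset F1 == Vset F2).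

Definition Mwl E (wt : {set 'I_n} -> nat) (w l : nat) :
  {set {set {set 'I_n}} * {set {set 'I_n}}} :=
  [set p | [&& is_matching E p.1, is_matching E p.2,
              consistent p.1 p.2,
              (#|p.1| == l./2)%N, (#|p.2| == l./2)%N
            & wsum wt (p.1 :|: p.2) == w]].

(* Rooted tree on 'I_n given by a parent function; [connect (parrel par) u v]
   means that v is an ancestor of u or v = u. *)
Definition parrel (par : 'I_n -> option 'I_n) : rel 'I_n :=
  fun u v => par u == Some v.

Definition rooted_tree (par : 'I_n -> option 'I_n) (r : 'I_n) : Prop :=
  [/\ par r = None, (forall v, v != r -> par v != None)
    & forall v, connect (parrel par) v r].

Definition elimination_tree E (par : 'I_n -> option 'I_n) (r : 'I_n) : Prop :=
  rooted_tree par r /\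
  forall e, e \in E -> forall u v, u \in e -> v \in e ->
    connect (parrel par) u v || connect (parrel par) v u.

Definition subtree (par : 'I_n -> option 'I_n) (v : 'I_n) : {set 'I_n} :=
  [set u | connect (parrel par) u v].

Definition plusset W : {set 'I_n + 'I_n} :=
  [set s | match s with inl u => u \in W | inr u => u \in W end].

Definition delta E W : {set {set 'I_n}} := [set e in E | e :&: W != set0].

Definition in_tpl E W E1 E2 L : bool :=
  [&& E1 \subset delta E W, E2 \subset delta E W, L \subset W & [disjoint E1 & E2]].

Definition in_dsj (I : {set 'I_n + 'I_n}) E1 E2 L : bool :=
  [&& [forall e in E1, forall s in e, inl s \notin I],
      [forall e in E2, forall s in e, inr s \notin I]
    & [disjoint plusset L & I]].

(* variables x = 'X_0, y = 'X_1, z = 'X_2, omega = 'X_3 *)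
Definition mon (wt : {set 'I_n} -> nat) E1 E2 L : {mpoly int[4]} :=
  'X_(0 : 'I_4) ^+ #|E1| * 'X_(1 : 'I_4) ^+ #|E2| * 'X_(2 : 'I_4) ^+ #|L|
  * 'X_(3 : 'I_4) ^+ wsum wt (E1 :|: E2).

Definition P_root E (wt : {set 'I_n} -> nat) (par : 'I_n -> option 'I_n) (r : 'I_n)
  : {mpoly int[4]} :=
  \sum_(E1 : {set {set 'I_n}}) \sum_(E2 : {set {set 'I_n}}) \sum_(L : {set 'I_n}
        | in_tpl E (subtree par r) E1 E2 L)
    mon wt E1 E2 L *
      (\sum_(K : {set 'I_n + 'I_n} | K \subset plusset (subtree par r))
          (-1) ^+ #|K| * (in_dsj K E1 E2 L)%:R : int)%:MP.

End Defs.

Definition coef4 (p : {mpoly int[4]}) (a b c d : nat) : int :=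
  p@_[multinom [tuple a; b; c; d]].

(* The elimination tree spans V, so K ranges over all subsets of [2n] and the
   inner alternating sum is inclusion-exclusion: it is 1 when the copies
   V(E1) u L and V(E2) u L + n together cover [2n], and 0 otherwise.  For a
   covering triple with |E1| = |E2| = l/2 and |L| = n - l, the count
   n <= |V(Ei)| + |L| <= 2|Ei| + n - l = n is tight, so L is the complement of
   V(Ei) and each Ei is a matching.  The monomials contributing to the
   coefficient are therefore exactly those of the triples (M1, M2, V \ V(M1))
   with (M1, M2) in M_{w,l}. *)
From HB Require Import structures.
From mathcomp Require Import all_boot all_order all_algebra.
From mathcomp Require Import mpoly zify.
Set Implicit Arguments. Unset Strict Implicit. Unset Printing Implicit Defensive.
Import GRing.Theory.
Local Open Scope ring_scope.

Lemma sum_sign_disjoint (R : comPzRingType) (T : finType) (S : {set T}) :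
  \sum_(K : {set T}) (-1) ^+ #|K| * [disjoint S & K]%:R = (S == setT)%:R :> R.
Proof.
(* Expand \prod_i (1 - [i \notin S]) as a sum over the subsets of T. *)
have prod_notin (A : {set T}) :
    \prod_(i in A) ((i \notin S)%:R : R) = [disjoint S & A]%:R.
  rewrite disjoint_sym disjoints_subset.
  have [/subsetP AS | /subsetPn[i iA]] := boolP (A \subset ~: S).
    by rewrite big1 // => i /AS; rewrite inE => ->.
  by rewrite inE negbK (bigD1 i) //= => ->; rewrite mul0r.
transitivity (\prod_(i : T) (- (i \notin S)%:R + 1) : R).
  rewrite bigA_distr; apply: eq_bigr => K _.
  by rewrite -big_mkcond /= prodrN prod_notin.
have [-> | ] := eqVneq S setT; first by rewrite big1 // => i _; rewrite inE oppr0 add0r.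
rewrite -properT => /properP[_ [i _ iS]].
by rewrite (bigD1 i) //= iS addNr mul0r.
Qed.

Lemma setC_of_cover (T : finType) (A B : {set T}) :
  A :|: B = setT -> (#|A| + #|B| <= #|T|)%N -> B = ~: A.
Proof.
move=> AB_T card_AB.
have [le_AB eq_AB] := leq_card_setU A B.
have /setDidPl BA : [disjoint B & A].
  by rewrite disjoint_sym -eq_AB eqn_leq le_AB AB_T cardsT card_AB.
by rewrite -setTD -AB_T setDUl setDv set0U BA.
Qed.

Lemma card_set_pair (R : pzSemiRingType) (T1 T2 : finType) (A : {set T1 * T2}) :
  #|A|%:R = \sum_(x : T1) \sum_(y : T2) ((x, y) \in A)%:R :> R.
Proof.
rewrite pair_bigA -sumr_const big_mkcond /=.
by apply: eq_bigr => -[x y] _; case: ifP.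
Qed.

Section ConsistentMatchings.
Variable n : nat.
Implicit Types (E F : {set {set 'I_n}}) (L : {set 'I_n}).

Lemma subtree_root (par : 'I_n -> option 'I_n) r : rooted_tree par r -> subtree par r = setT.
Proof. by case=> _ _ to_root; apply/setP => u; rewrite !inE to_root. Qed.

Lemma delta_setT E : simple_graph E -> delta E setT = E.
Proof.
move=> simpleE; apply/setP => e; rewrite inE setIT.
by case eE: (e \in E); rewrite //= -card_gt0 simpleE.
Qed.

Lemma in_tpl_setT E E1 E2 L : simple_graph E ->
  in_tpl E setT E1 E2 L = [&& E1 \subset E, E2 \subset E & [disjoint E1 & E2]].
Proof. by move=> simpleE; rewrite /in_tpl delta_setT // subsetT. Qed.

Lemma leq_card_Vset E F : simple_graph E -> F \subset E ->
  (#|Vset F| <= 2 * #|F| ?= iff is_matching E F)%N.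
Proof.
move=> simpleE FE.
have <- : (\sum_(e in F) #|e| = 2 * #|F|)%N.
  rewrite (eq_bigr (fun=> 2%N)) => [|e /(subsetP FE)/simpleE //].
  by rewrite sum_nat_const mulnC.
suff -> : is_matching E F = trivIset F by exact: leq_card_cover.
rewrite /is_matching FE; apply/forall_inP/trivIsetP => [matchF e f eF fF | trivF e eF].
  by move/forall_inP/(_ f fF)/implyP: (matchF e eF).
by apply/forall_inP => f fF; apply/implyP; apply: trivF.
Qed.

Lemma cover_by_matching E F L l : simple_graph E -> ~~ odd l -> (l <= n)%N ->
  [&& F \subset E, Vset F :|: L == setT, #|F| == l./2 & #|L| == n - l]%N
  = [&& L == ~: Vset F, is_matching E F & #|F| == l./2]%N.
Proof.
move=> simpleE even_l le_ln.
have double_half : (2 * l./2)%N = l.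
  by rewrite -{2}(odd_double_half l) (negbTE even_l) mul2n.
apply/and4P/and3P => [[FE /eqP cover_FL /eqP card_F /eqP card_L] | [/eqP -> matchF /eqP card_F]].
- have [le_V eq_V] := leq_card_Vset simpleE FE.
  rewrite card_F double_half in le_V eq_V.
  have card_V : #|Vset F| = l.
    (* n = |V(F) u L| <= |V(F)| + |L| <= l + (n - l) *)
    have [+ _] := leq_card_setU (Vset F) L.
    rewrite cover_FL cardsT card_ord card_L.
    by move: le_V le_ln; clear; lia.
  rewrite (setC_of_cover cover_FL); last by rewrite card_ord card_V card_L; lia.
  by rewrite -eq_V card_V card_F !eqxx.
- have FE : F \subset E by case/andP: matchF.
  have [_ eq_V] := leq_card_Vset simpleE FE.
  rewrite matchF card_F double_half in eq_V.
  have := cardsC (Vset F); rewrite card_ord (eqP eq_V) => card_VC.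
  split; rewrite ?setUCr ?card_F //.
  by apply/eqP; move: card_VC; clear; lia.
Qed.

Lemma cover_triple_Mwl E wt w l E1 E2 L : simple_graph E -> ~~ odd l -> (l <= n)%N ->
  [&& in_tpl E setT E1 E2 L, (Vset E1 :|: L == setT) && (Vset E2 :|: L == setT)
    & [&& #|E1| == l./2, #|E2| == l./2, #|L| == n - l & wsum wt (E1 :|: E2) == w]]%N
  = (L == ~: Vset E1) && ((E1, E2) \in Mwl E wt w l).
Proof.
move=> simpleE even_l le_ln.
have cover1 := cover_by_matching E1 L simpleE even_l le_ln.
have cover2 := cover_by_matching E2 L simpleE even_l le_ln.
rewrite in_tpl_setT // inE /= /consistent setI_eq0.
apply/idP/idP.
- case/and3P => /and3P[E1E E2E disj] /andP[cov1 cov2] /and4P[card1 card2 card_L weight].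
  move: cover1 cover2; rewrite E1E E2E cov1 cov2 card1 card2 card_L /=.
  move=> /esym/and3P[/eqP L1 match1 _] /esym/and3P[/eqP L2 match2 _].
  have V12 : Vset E1 = Vset E2 by apply: setC_inj; rewrite -L1 -L2.
  by rewrite L1 V12 !eqxx match1 match2 disj weight.
- case/andP => /eqP L1 /and5P[match1 match2 /andP[disj /eqP V12] card1 /andP[card2 weight]].
  move: cover1 cover2; rewrite -V12 L1 !eqxx match1 match2 card1 card2 /=.
  move=> /and3P[E1E _ card_L] /and3P[E2E _ _].
  by rewrite E1E E2E disj setUCr eqxx card_L weight.
Qed.

Definition doubled_cover E1 E2 L : {set 'I_n + 'I_n} :=
  [set s | match s with inl u => u \in Vset E1 :|: L | inr u => u \in Vset E2 :|: L end].

Lemma in_dsjE K E1 E2 L : in_dsj K E1 E2 L = [disjoint doubled_cover E1 E2 L & K].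
Proof.
rewrite /in_dsj [RHS]disjoint_sym [RHS]disjoints_subset disjoint_sym disjoints_subset.
apply/and3P/subsetP => [[/forall_inP cov1 /forall_inP cov2 /subsetP KL] s sK | Kcov].
- case: s sK => u uK; move: (KL _ uK); rewrite !inE negb_or => ->;
    rewrite andbT; apply/bigcupP => -[e eE ue].
  + by move/forall_inP/(_ u ue): (cov1 e eE); rewrite uK.
  + by move/forall_inP/(_ u ue): (cov2 e eE); rewrite uK.
- split.
  + apply/forall_inP => e eE; apply/forall_inP => u ue; apply/negP => /Kcov.
    by rewrite !inE negb_or => /andP[/negP[]]; apply/bigcupP; exists e.
  + apply/forall_inP => e eE; apply/forall_inP => u ue; apply/negP => /Kcov.
    by rewrite !inE negb_or => /andP[/negP[]]; apply/bigcupP; exists e.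
  + by apply/subsetP => -[u|u] /Kcov; rewrite !inE negb_or => /andP[_ ->].
Qed.

Lemma doubled_cover_setT E1 E2 L :
  (doubled_cover E1 E2 L == setT) = (Vset E1 :|: L == setT) && (Vset E2 :|: L == setT).
Proof.
apply/eqP/andP => [cover | [/eqP cover1 /eqP cover2]].
  by split; apply/eqP/setP => u; rewrite inE;
    [move/setP: cover => /(_ (inl u)) | move/setP: cover => /(_ (inr u))]; rewrite !inE.
by apply/setP => -[u|u]; rewrite in_setT inE /= ?cover1 ?cover2 in_setT.
Qed.

Lemma sum_sign_dsj E1 E2 L :
  \sum_(K : {set 'I_n + 'I_n} | K \subset plusset setT) (-1) ^+ #|K| * (in_dsj K E1 E2 L)%:R
  = ((Vset E1 :|: L == setT) && (Vset E2 :|: L == setT))%:R :> int.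
Proof.
rewrite (eq_bigl xpredT) => [|K]; last by apply/subsetP => -[u|u] _; rewrite inE.
under eq_bigr do rewrite in_dsjE.
by rewrite sum_sign_disjoint doubled_cover_setT.
Qed.

Lemma coef4_mon wt E1 E2 L a b c d :
  coef4 (mon wt E1 E2 L) a b c d
  = [&& #|E1| == a, #|E2| == b, #|L| == c & wsum wt (E1 :|: E2) == d]%:R.
Proof.
rewrite /coef4 /mon.
set m := [multinom [tuple #|E1|; #|E2|; #|L|; wsum wt (E1 :|: E2)]].
have -> : 'X_(0 : 'I_4) ^+ #|E1| * 'X_(1 : 'I_4) ^+ #|E2| * 'X_(2 : 'I_4) ^+ #|L|
          * 'X_(3 : 'I_4) ^+ wsum wt (E1 :|: E2) = 'X_[m] :> {mpoly int[4]}.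
  by rewrite [RHS]mpolyXE_id !big_ord_recr big_ord0 /= mul1r.
by rewrite mcoeffX -val_eqE /= -val_eqE /= !eqseq_cons andbT.
Qed.

Lemma coef4_tpl_sum E wt w l E1 E2 : simple_graph E -> ~~ odd l -> (l <= n)%N ->
  coef4 (\sum_(L : {set 'I_n} | in_tpl E setT E1 E2 L)
           mon wt E1 E2 L *
           (\sum_(K : {set 'I_n + 'I_n} | K \subset plusset setT)
               (-1) ^+ #|K| * (in_dsj K E1 E2 L)%:R : int)%:MP)
        l./2 l./2 (n - l) w
  = ((E1, E2) \in Mwl E wt w l)%:R.
Proof.
move=> simpleE even_l le_ln.
rewrite /coef4 raddf_sum big_mkcond /=.
rewrite (eq_bigr (fun L => ((L == ~: Vset E1) && ((E1, E2) \in Mwl E wt w l))%:R)) => [|L _].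
  by rewrite (bigD1 (~: Vset E1)) //= eqxx big1 ?addr0 // => L /negbTE ->.
rewrite -(cover_triple_Mwl wt w E1 E2 L simpleE even_l le_ln).
case: ifP => //= tpl.
by rewrite mulrC mcoeffCM sum_sign_dsj -/(coef4 _ _ _ _ _) coef4_mon -natrM mulnb.
Qed.

End ConsistentMatchings.

Theorem lemma7 (n N : nat) (E : {set {set 'I_n}}) (wt : {set 'I_n} -> nat)
  (w l : nat) (par : 'I_n -> option 'I_n) (r : 'I_n) :
  simple_graph E -> connected_graph E ->
  (forall e, e \in E -> (1 <= wt e <= N)%N) ->
  ~~ odd l -> (l <= n)%N ->
  elimination_tree E par r ->
  (#|Mwl E wt w l|)%:Z = coef4 (P_root E wt par r) l./2 l./2 (n - l) w.
Proof.
move=> simpleE _ _ even_l le_ln [tree _].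
rewrite /P_root subtree_root // -natz card_set_pair /coef4 raddf_sum.
apply: eq_bigr => E1 _; rewrite raddf_sum; apply: eq_bigr => E2 _.
by apply/esym/coef4_tpl_sum.
Qed.
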